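(* Let $p\geq3$, $k\geq1$ be integers. There exists $\tilde\lambda_c=\tilde\lambda_c(p,k)$ such that for every $\lambda\geq\tilde\lambda_c$, $$\sup_{m\in[0,m_\lambda]}S_{p,k}(m,x_* )<0.$$
   Context: For $\lambda>0$: $m_\lambda=\min\left\{1,\left(\frac{(p-2)\sqrt p}{\lambda\sqrt{p-1}}\right)^{1/k}\right\}$; $m_*=m_*(\lambda)$ is the largest solution $m\in(0,1]$ of $\lambda m^k/\sqrt p=m^2/\sqrt{1-m^2}$; $x_*=\lambda m_*^k\left(\frac12-\frac1k\right)-\sqrt{\frac{\lambda^2m_*^{2k}}{4}+p}$. $I_1(z)=\int_{\sqrt2}^z\sqrt{t^2-2}\,dt$ for $z\ge\sqrt2$, $I_1(z)=+\infty$ for $z<\sqrt2$; $\tilde S_{p,k}(m,y)=\tfrac12\log((1-m^2)(p-1))+\tfrac{2-p}{2p}y^2-\tfrac{\lambda m^k}{p}\sqrt{\tfrac{2(p-1)}{p}}\,y-\tfrac{\lambda^2m^{2k-2}}{2p^2}(p+(1-p)m^2)-I_1(-y)$; $y(x,m)=\frac{px-(1-p/k)\lambda m^k}{\sqrt{2p(p-1)}}$; $S_{p,k}(m,x)=\tilde S_{p,k}(m,y(x,m))$. *)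

From Stdlib Require Import Reals Lra.
From Coquelicot Require Import Coquelicot.
Open Scope R_scope.

Definition m_lam (p k : nat) (lam : R) : R :=
  Rmin 1 (Rpower ((INR p - 2) * sqrt (INR p) / (lam * sqrt (INR p - 1)))
                 (1 / INR k)).

Definition mstar_eq (p k : nat) (lam m : R) : Prop :=
  lam * m ^ k / sqrt (INR p) = m ^ 2 / sqrt (1 - m ^ 2).

Definition is_mstar (p k : nat) (lam m : R) : Prop :=
  0 < m <= 1 /\ mstar_eq p k lam m /\
  (forall m', 0 < m' <= 1 -> mstar_eq p k lam m' -> m' <= m).

Definition xstar (p k : nat) (lam ms : R) : R :=
  lam * ms ^ k * (1 / 2 - 1 / INR k)
  - sqrt (lam ^ 2 * ms ^ (2 * k) / 4 + INR p).

Definition I1 (z : R) : Rbar :=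
  if Rle_dec (sqrt 2) z
  then Finite (RInt (fun t => sqrt (t ^ 2 - 2)) (sqrt 2) z)
  else p_infty.

Definition elog (u : R) : Rbar :=
  if Rlt_dec 0 u then Finite (ln u) else m_infty.

Definition S_tilde (p k : nat) (lam m y : R) : Rbar :=
  let P := INR p in
  Rbar_minus
    (Rbar_plus (Rbar_mult (Finite (1 / 2)) (elog ((1 - m ^ 2) * (P - 1))))
       (Finite ((2 - P) / (2 * P) * y ^ 2
                - lam * m ^ k / P * sqrt (2 * (P - 1) / P) * y
                - lam ^ 2 * m ^ (2 * k - 2) / (2 * P ^ 2) * (P + (1 - P) * m ^ 2))))
    (I1 (- y)).

Definition y_of (p k : nat) (lam x m : R) : R :=
  let P := INR p in
  (P * x - (1 - P / INR k) * lam * m ^ k) / sqrt (2 * P * (P - 1)).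

Definition S_pk (p k : nat) (lam m x : R) : Rbar :=
  S_tilde p k lam m (y_of p k lam x m).

(* sup_{m in [0, m_lambda]} S_{p,k}(m, x) in the extended reals:
   values equal to -oo do not contribute (sup of the empty set is -oo). *)
Definition supS (p k : nat) (lam x : R) : Rbar :=
  Lub_Rbar (fun v : R => exists m, 0 <= m <= m_lam p k lam /\ S_pk p k lam m x = Finite v).

(** For large [lam] the function [lam m^k sqrt (1 - m^2) - sqrt p m^2] is positive at
    [m = 1/2] and negative at [m = 1], so the largest root [m_*] of the defining
    equation lies in [[1/2, 1)].  Hence [lam m_*^k >= lam 2^-k] is large and
    [x_* <= -lam m_*^k / k] is very negative.  On [[0, m_lam]] the coefficient
    [lam m^k] stays below [2p], so [y(x_*, m)] is very negative too.  Then the concave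
    term [(2-p) y^2 / (2p)] swamps the linear term in [y], while the logarithm is at
    most [(p-2)/2] and [I_1 >= 0]; thus [S_{p,k}(m, x_* ) <= -1] uniformly in [m]. *)
From Stdlib Require Import Reals Lra.
From Coquelicot Require Import Coquelicot.
Open Scope R_scope.

Lemma last_root (f : R -> R) (a b : R) :
  a <= b -> (forall x, a <= x <= b -> continuous f x) -> 0 <= f a -> f b < 0 ->
  exists s, a <= s < b /\ f s = 0 /\ forall x, s < x <= b -> f x < 0.
Proof.
  intros Hab Hc Ha Hb.
  set (E := fun x => a <= x <= b /\ 0 <= f x).
  destruct (completeness E) as [s [Hub Hlub]].
  - exists b. intros x [Hx _]. lra.
  - exists a. split; [lra | exact Ha].
  - assert (Has : a <= s) by (apply Hub; split; [lra | exact Ha]).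
    assert (Hsb : s <= b) by (apply Hlub; intros x [Hx _]; lra).
    assert (Hfs : f s = 0).
    { destruct (Rtotal_order (f s) 0) as [Hneg | [Hzero | Hpos]]; [exfalso | exact Hzero | exfalso].
      - destruct (Hc s (conj Has Hsb) _ (open_lt 0 (f s) Hneg)) as [eps Heps].
        assert (Hub' : s <= s - eps).
        { apply Hlub. intros x [Hx Hfx]. apply Rnot_lt_le. intro Hlt.
          assert (x <= s) by (apply Hub; split; assumption).
          assert (Hdist : Rabs (x - s) < eps) by (rewrite Rabs_left1; lra).
          specialize (Heps x Hdist). lra. }
        pose proof (cond_pos eps). lra.
      - destruct (Hc s (conj Has Hsb) _ (open_gt 0 (f s) Hpos)) as [eps Heps].
        pose proof (cond_pos eps).
        assert (Hsb' : s < b) by (destruct Hsb as [Hsb | ->]; [exact Hsb | lra]).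
        set (x := Rmin (s + eps / 2) b).
        assert (Hsx : s < x) by (apply Rmin_glb_lt; lra).
        assert (Hxs : x - s < eps) by (pose proof (Rmin_l (s + eps / 2) b); unfold x; lra).
        assert (Hfx : 0 < f x) by (apply Heps; change (Rabs (x - s) < eps); rewrite Rabs_right; lra).
        assert (x <= s) by (apply Hub; split; [split; [lra | apply Rmin_r] | lra]).
        lra. }
    exists s. split; [split; [exact Has |] | split; [exact Hfs |]].
    + destruct Hsb as [Hsb | ->]; [exact Hsb | lra].
    + intros x Hx. apply Rnot_le_lt. intro Hfx.
      assert (x <= s) by (apply Hub; split; [lra | exact Hfx]). lra.
Qed.

(* [(lam m^k / sqrt p - m^2 / sqrt (1 - m^2)) * sqrt p * sqrt (1 - m^2)]: same zeros
   as the equation of [m_*] on [(0, 1)], but continuous on all of [R]. *)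
Definition mstar_gap (p k : nat) (lam m : R) : R :=
  lam * m ^ k * sqrt (1 - m ^ 2) - sqrt (INR p) * m ^ 2.

Lemma continuous_mstar_gap (p k : nat) (lam m : R) : continuous (mstar_gap p k lam) m.
Proof.
  apply continuity_pt_filterlim. unfold mstar_gap.
  apply continuity_pt_minus; [apply continuity_pt_mult | apply derivable_continuous_pt; reg].
  - apply derivable_continuous_pt; reg.
  - apply (continuity_pt_comp (fun m => 1 - m ^ 2) sqrt); [apply derivable_continuous_pt; reg |].
    apply continuity_pt_filterlim, continuous_sqrt.
Qed.

Lemma mstar_eq_iff_gap (p k : nat) (lam m : R) :
  0 < INR p -> 0 < m < 1 -> mstar_eq p k lam m <-> mstar_gap p k lam m = 0.
Proof.
  intros HP Hm.
  assert (Hq : 0 < sqrt (INR p)) by (apply sqrt_lt_R0; lra).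
  assert (Hr : 0 < sqrt (1 - m ^ 2)) by (apply sqrt_lt_R0; nra).
  assert (Hgap : mstar_gap p k lam m = sqrt (INR p) * sqrt (1 - m ^ 2)
                   * (lam * m ^ k / sqrt (INR p) - m ^ 2 / sqrt (1 - m ^ 2)))
    by (unfold mstar_gap; field; lra).
  unfold mstar_eq. rewrite Hgap. split; intro H.
  - rewrite H. ring.
  - apply Rminus_diag_uniq.
    destruct (Rmult_integral _ _ H) as [H0 | H0]; [nra | exact H0].
Qed.

(* At [m = 1] the right-hand side is [1 / 0], which Rocq evaluates to [0]. *)
Lemma not_mstar_eq_1 (p k : nat) (lam : R) : 0 < lam -> 0 < INR p -> ~ mstar_eq p k lam 1.
Proof.
  intros Hl HP H. unfold mstar_eq in H.
  replace (1 - 1 ^ 2) with 0 in H by ring.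
  rewrite sqrt_0, pow1, Rmult_1_r in H. unfold Rdiv at 2 in H.
  rewrite Rinv_0, Rmult_0_r in H.
  assert (0 < lam / sqrt (INR p)) by (apply Rdiv_lt_0_compat; [lra | apply sqrt_lt_R0; lra]).
  lra.
Qed.

Lemma mstar_gap_1_neg (p k : nat) (lam : R) : 0 < INR p -> mstar_gap p k lam 1 < 0.
Proof.
  intros HP. unfold mstar_gap.
  replace (1 - 1 ^ 2) with 0 by ring. rewrite sqrt_0.
  assert (0 < sqrt (INR p)) by (apply sqrt_lt_R0; lra). simpl. lra.
Qed.

Lemma is_mstar_exists (p k : nat) (lam : R) :
  0 < lam -> 0 < INR p -> 0 <= mstar_gap p k lam (1 / 2) ->
  exists ms, is_mstar p k lam ms /\ 1 / 2 <= ms.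
Proof.
  intros Hl HP Hhalf.
  destruct (last_root (mstar_gap p k lam) (1 / 2) 1) as [s [Hs [Hroot Hlast]]].
  - lra.
  - intros x _. apply continuous_mstar_gap.
  - exact Hhalf.
  - apply mstar_gap_1_neg, HP.
  - exists s. split; [| lra]. split; [lra | split].
    + apply mstar_eq_iff_gap; [exact HP | lra | exact Hroot].
    + intros m Hm Heq. apply Rnot_lt_le. intro Hsm.
      assert (Hm1 : m <> 1) by (intros ->; exact (not_mstar_eq_1 p k lam Hl HP Heq)).
      apply mstar_eq_iff_gap in Heq; [| exact HP | lra].
      specialize (Hlast m). lra.
Qed.

Lemma is_mstar_unique (p k : nat) (lam ms ms' : R) :
  is_mstar p k lam ms -> is_mstar p k lam ms' -> ms = ms'.
Proof.
  intros [Hms [Heq Hmax]] [Hms' [Heq' Hmax']].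
  apply Rle_antisym; [apply Hmax' | apply Hmax]; assumption.
Qed.

Definition lam_crit (p k : nat) : R := 2 ^ k * INR k * (8 * INR p + 48).

Lemma lam_crit_pos (p k : nat) : 1 <= INR k -> 0 < lam_crit p k.
Proof.
  intros HK. unfold lam_crit.
  assert (0 < 2 ^ k) by (apply pow_lt; lra).
  pose proof (pos_INR p).
  apply Rmult_lt_0_compat; [apply Rmult_lt_0_compat |]; lra.
Qed.

Lemma lam_crit_le_half_pow (p k : nat) (lam : R) :
  lam_crit p k <= lam -> INR k * (8 * INR p + 48) <= lam * (1 / 2) ^ k.
Proof.
  intros Hlam.
  assert (Hhalf : 0 < (1 / 2) ^ k) by (apply pow_lt; lra).
  replace (INR k * (8 * INR p + 48)) with (lam_crit p k * (1 / 2) ^ k).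
  - apply Rmult_le_compat_r; lra.
  - unfold lam_crit.
    replace (2 ^ k * INR k * (8 * INR p + 48) * (1 / 2) ^ k)
      with (INR k * (8 * INR p + 48) * (2 * (1 / 2)) ^ k) by (rewrite Rpow_mult_distr; ring).
    replace (2 * (1 / 2)) with 1 by field. rewrite pow1. ring.
Qed.

Lemma mstar_gap_half_nonneg (p k : nat) (lam : R) :
  3 <= INR p -> 1 <= INR k -> lam_crit p k <= lam -> 0 <= mstar_gap p k lam (1 / 2).
Proof.
  intros HP HK Hlam. unfold mstar_gap.
  pose proof (lam_crit_le_half_pow p k lam Hlam) as Hbig.
  assert (Hr : 1 / 2 <= sqrt (1 - (1 / 2) ^ 2)).
  { rewrite <- (sqrt_pow2 (1 / 2)) at 1 by lra. apply sqrt_le_1_alt. lra. }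
  assert (Hq : sqrt (INR p) <= INR p).
  { pose proof (sqrt_pos (INR p)). pose proof (sqrt_sqrt (INR p) ltac:(lra)). nra. }
  assert (8 * INR p + 48 <= lam * (1 / 2) ^ k) by nra.
  assert ((8 * INR p + 48) * (1 / 2) <= lam * (1 / 2) ^ k * sqrt (1 - (1 / 2) ^ 2))
    by (apply Rmult_le_compat; lra).
  lra.
Qed.

Lemma xstar_le (p k : nat) (lam ms : R) :
  0 <= INR p -> 0 <= lam * ms ^ k -> xstar p k lam ms <= - (lam * ms ^ k) / INR k.
Proof.
  intros HP Ha. unfold xstar.
  replace (lam ^ 2 * ms ^ (2 * k)) with ((lam * ms ^ k) ^ 2)
    by (rewrite Nat.mul_comm, pow_mult; ring).
  set (a := lam * ms ^ k) in *.
  assert (a / 2 <= sqrt (a ^ 2 / 4 + INR p)).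
  { rewrite <- (sqrt_pow2 (a / 2)) by lra. apply sqrt_le_1_alt. lra. }
  unfold Rdiv in *. lra.
Qed.

Lemma xstar_le_of_half (p k : nat) (lam ms : R) :
  3 <= INR p -> 1 <= INR k -> lam_crit p k <= lam -> 1 / 2 <= ms ->
  xstar p k lam ms <= - (8 * INR p + 48).
Proof.
  intros HP HK Hlam Hms.
  pose proof (lam_crit_le_half_pow p k lam Hlam) as Hbig.
  assert (Hpow : lam * (1 / 2) ^ k <= lam * ms ^ k).
  { apply Rmult_le_compat_l; [pose proof (lam_crit_pos p k HK); lra |].
    apply pow_incr. lra. }
  assert (0 <= INR k * (8 * INR p + 48)) by (apply Rmult_le_pos; lra).
  assert (8 * INR p + 48 <= lam * ms ^ k / INR k) by (apply Rle_div_r; lra).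
  eapply Rle_trans; [apply xstar_le; lra |].
  unfold Rdiv in *. lra.
Qed.

Lemma pow_le_of_le_Rpower_inv (c m : R) (k : nat) :
  0 < c -> 1 <= INR k -> 0 <= m <= Rpower c (1 / INR k) -> m ^ k <= c.
Proof.
  intros Hc HK Hm.
  replace c with (Rpower c (1 / INR k) ^ k).
  - apply pow_incr. exact Hm.
  - rewrite <- Rpower_pow by apply exp_pos.
    rewrite Rpower_mult. replace (1 / INR k * INR k) with 1 by (field; lra).
    apply Rpower_1, Hc.
Qed.

Lemma lam_pow_le_on_m_lam (p k : nat) (lam m : R) :
  3 <= INR p -> 1 <= INR k -> 0 < lam -> 0 <= m <= m_lam p k lam ->
  0 <= lam * m ^ k <= 2 * INR p.
Proof.
  intros HP HK Hl [Hm0 Hm]. unfold m_lam in Hm.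
  set (c := (INR p - 2) * sqrt (INR p) / (lam * sqrt (INR p - 1))) in Hm.
  assert (Hq1 : 0 < sqrt (INR p - 1)) by (apply sqrt_lt_R0; lra).
  assert (Hq : 0 < sqrt (INR p)) by (apply sqrt_lt_R0; lra).
  assert (Hc : 0 < c)
    by (unfold c; apply Rdiv_lt_0_compat; apply Rmult_lt_0_compat; lra).
  assert (Hmk : m ^ k <= c).
  { apply pow_le_of_le_Rpower_inv; [exact Hc | exact HK |].
    split; [exact Hm0 | eapply Rle_trans; [exact Hm | apply Rmin_r]]. }
  assert (Hlc : lam * c <= 2 * INR p).
  { unfold c.
    replace (lam * ((INR p - 2) * sqrt (INR p) / (lam * sqrt (INR p - 1))))
      with ((INR p - 2) * sqrt (INR p) / sqrt (INR p - 1)) by (field; lra).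
    apply Rmult_le_reg_r with (sqrt (INR p - 1)); [exact Hq1 |].
    unfold Rdiv. rewrite Rmult_assoc, Rinv_l by lra.
    pose proof (sqrt_sqrt (INR p) ltac:(lra)).
    pose proof (sqrt_sqrt (INR p - 1) ltac:(lra)).
    assert (sqrt (INR p) <= 2 * sqrt (INR p - 1)) by nra.
    nra. }
  split.
  - apply Rmult_le_pos; [lra | apply pow_le, Hm0].
  - assert (lam * m ^ k <= lam * c) by (apply Rmult_le_compat_l; lra). lra.
Qed.

Lemma y_of_le (p k : nat) (lam x m : R) :
  3 <= INR p -> 1 <= INR k -> 0 <= lam * m ^ k <= 2 * INR p -> x <= - (8 * INR p + 48) ->
  y_of p k lam x m <= - (24 + 3 * INR p).
Proof.
  intros HP HK Hb Hx. unfold y_of.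
  set (P := INR p) in *. set (K := INR k) in *. set (b := lam * m ^ k) in *.
  set (D := sqrt (2 * P * (P - 1))).
  assert (HD : 0 < D) by (apply sqrt_lt_R0; nra).
  assert (HDD : D * D = 2 * P * (P - 1)) by (apply sqrt_sqrt; nra).
  assert (HD2 : D <= 2 * P) by nra.
  assert (HPK : 0 <= P / K * b <= P * b).
  { split; [apply Rmult_le_pos; [apply Rdiv_le_0_compat |]; lra |].
    apply Rmult_le_compat_r; [lra |].
    apply Rmult_le_reg_r with K; [lra |].
    unfold Rdiv. rewrite Rmult_assoc, Rinv_l by lra. nra. }
  replace (P * x - (1 - P / K) * lam * m ^ k) with (P * x - b + P / K * b) by (unfold b; ring).
  apply Rmult_le_reg_r with D; [exact HD |].
  unfold Rdiv. rewrite Rmult_assoc, Rinv_l by lra.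
  nra.
Qed.

Lemma I1_nonneg (z : R) : Rbar_le (Finite 0) (I1 z).
Proof.
  unfold I1. destruct (Rle_dec (sqrt 2) z) as [Hz | _]; simpl; [| trivial].
  apply RInt_ge_0; [exact Hz | | intros; apply sqrt_pos].
  apply (ex_RInt_continuous (V := R_CompleteNormedModule)). intros t _.
  apply (continuous_comp (fun t => t ^ 2 - 2) sqrt); [| apply continuous_sqrt].
  apply continuity_pt_filterlim, derivable_continuous_pt. reg.
Qed.

Lemma half_elog_le (u : R) :
  Rbar_le (Rbar_mult (Finite (1 / 2)) (elog u)) (Finite ((u - 1) / 2)).
Proof.
  unfold elog. destruct (Rlt_dec 0 u) as [Hu | _].
  - simpl. pose proof (exp_ineq1_le (ln u)) as Hexp.
    rewrite exp_ln in Hexp by exact Hu. lra.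
  - assert (Hhalf : Rbar_lt (Finite 0) (Finite (1 / 2))) by (simpl; lra).
    rewrite (is_Rbar_mult_unique _ _ _
               (is_Rbar_mult_sym _ _ _ (is_Rbar_mult_m_infty_pos _ Hhalf))).
    simpl. trivial.
Qed.

Lemma Rbar_minus_plus_le (A I : Rbar) (a q : R) :
  Rbar_le A (Finite a) -> Rbar_le (Finite 0) I ->
  Rbar_le (Rbar_minus (Rbar_plus A (Finite q)) I) (Finite (a + q)).
Proof. destruct A, I; simpl; intros; trivial; lra. Qed.

Lemma S_tilde_le_m1 (p k : nat) (lam m y : R) :
  3 <= INR p -> 0 <= m <= 1 -> 0 <= lam * m ^ k <= 2 * INR p -> y <= - (24 + 3 * INR p) ->
  Rbar_le (S_tilde p k lam m y) (Finite (-1)).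
Proof.
  intros HP Hm Hb Hy. unfold S_tilde.
  eapply Rbar_le_trans;
    [apply Rbar_minus_plus_le; [apply half_elog_le | apply I1_nonneg] |].
  cbn [Rbar_le]. set (P := INR p) in *. set (b := lam * m ^ k) in *.
  set (s := sqrt (2 * (P - 1) / P)).
  set (T := lam ^ 2 * m ^ (2 * k - 2) / (2 * P ^ 2) * (P + (1 - P) * m ^ 2)).
  assert (Hlog : ((1 - m ^ 2) * (P - 1) - 1) / 2 <= (P - 2) / 2).
  { assert (0 <= m ^ 2) by nra. unfold Rdiv. nra. }
  assert (Hs : 0 <= s <= 2).
  { split; [apply sqrt_pos |].
    rewrite <- (sqrt_pow2 2) by lra. apply sqrt_le_1_alt.
    apply Rle_div_l; [lra |]. lra. }
  assert (HT : 0 <= T).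
  { unfold T. apply Rmult_le_pos.
    - apply Rdiv_le_0_compat; [apply Rmult_le_pos; [nra | apply pow_le; lra] | nra].
    - assert (m ^ 2 <= 1) by nra. nra. }
  set (z := - y).
  assert (Hz : 24 + 3 * P <= z) by (unfold z; lra).
  assert (Hquad : (2 - P) / (2 * P) * y ^ 2 <= - (z * z) / 6).
  { replace ((2 - P) / (2 * P) * y ^ 2) with (- ((P - 2) / P) * (z * z) / 2)
      by (unfold z; field; lra).
    assert (1 / 3 <= (P - 2) / P) by (apply (Rle_div_r (1 / 3)); lra).
    nra. }
  assert (Hlin : - (b / P * s * y) <= 4 * z).
  { replace (- (b / P * s * y)) with (b / P * s * z) by (unfold z; ring).
    assert (b / P <= 2) by (apply Rle_div_l; lra).
    assert (0 <= b / P) by (apply Rdiv_le_0_compat; lra).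
    assert (b / P * s <= 4) by nra.
    nra. }
  assert (Hbig : (24 + 3 * P) * (3 * P) <= z * (z - 24)) by (apply Rmult_le_compat; lra).
  nra.
Qed.

Lemma Lub_Rbar_le (E : R -> Prop) (c : R) :
  (forall v, E v -> v <= c) -> Rbar_le (Lub_Rbar E) (Finite c).
Proof. intros Hc. apply (proj2 (Lub_Rbar_correct E)). exact Hc. Qed.

Theorem proposition4p3 (p k : nat) (hp : (3 <= p)%nat) (hk : (1 <= k)%nat) :
  exists lamc : R, 0 < lamc /\
    forall lam : R, lamc <= lam ->
      (exists ms, is_mstar p k lam ms) /\
      (forall ms, is_mstar p k lam ms ->
         Rbar_lt (supS p k lam (xstar p k lam ms)) (Finite 0)).
Proof.
  assert (HP : 3 <= INR p) by (apply (le_INR 3) in hp; simpl in hp; lra).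
  assert (HK : 1 <= INR k) by (apply (le_INR 1) in hk; simpl in hk; lra).
  exists (lam_crit p k). split; [apply lam_crit_pos, HK |].
  intros lam Hlam.
  assert (Hl : 0 < lam) by (pose proof (lam_crit_pos p k HK); lra).
  destruct (is_mstar_exists p k lam) as [s [Hs Hs_half]];
    [exact Hl | lra | apply mstar_gap_half_nonneg; assumption |].
  split; [exists s; exact Hs |].
  intros ms Hms. rewrite (is_mstar_unique p k lam ms s Hms Hs).
  pose proof (xstar_le_of_half p k lam s HP HK Hlam Hs_half) as Hx.
  apply Rbar_le_lt_trans with (Finite (-1)); [| simpl; lra].
  unfold supS. apply Lub_Rbar_le. intros v [m [Hm HS]].
  assert (Hm1 : m <= 1) by (eapply Rle_trans; [apply Hm | apply Rmin_l]).
  pose proof (lam_pow_le_on_m_lam p k lam m HP HK Hl Hm) as Hb.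
  pose proof (y_of_le p k lam _ m HP HK Hb Hx) as Hy.
  pose proof (S_tilde_le_m1 p k lam m _ HP (conj (proj1 Hm) Hm1) Hb Hy) as HSle.
  unfold S_pk in HS. rewrite HS in HSle. exact HSle.
Qed.
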